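(* Let $\succ$ be a binary relation on $\mathcal{F}$ admitting a unique hope-and-prepare representation $(u,C,D)$: $u:X\to\mathbb{R}$ non-constant affine (unique up to positive affine transformation), $C,D\subseteq\Delta$ unique convex compact sets with $C\cap D\neq\emptyset$, and for all $f,g\in\mathcal{F}$, $f\succ g$ iff $\min_{p\in C}\int u(f)\,dp>\min_{p\in C}\int u(g)\,dp$ and $\max_{p\in D}\int u(f)\,dp>\max_{p\in D}\int u(g)\,dp$. For a binary relation $\succ^*$ on $\mathcal{F}$, the following are equivalent: (i) $\succ^*$ is an invariant biseparable preference and an extension of $\succ$ (i.e. $f\succ g$ implies $f\succ^* g$ for all $f,g\in\mathcal{F}$); (ii) there exists $\alpha\in[0,1]$ such that for all $f,g\in\mathcal{F}$, $$f\succ^* g\iff \alpha\min_{p\in C}\int u(f)\,dp+(1-\alpha)\max_{p\in D}\int u(f)\,dp>\alpha\min_{p\in C}\int u(g)\,dp+(1-\alpha)\max_{p\in D}\int u(g)\,dp,$$ and this $\alpha$ is unique whenever $\succ$ is not complete.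
   Context: $S$ is a set of states with algebra $\Sigma$; $X$ is a non-singleton convex subset of a real vector space; $\mathcal{F}$ is the set of simple acts $f:S\to X$ ($\Sigma$-measurable, finitely many values), with pointwise mixtures; elements of $X$ are identified with constant acts. $\Delta$ is the set of finitely additive probability measures on $(S,\Sigma)$ with the weak* topology. A binary relation $\succ^*$ on $\mathcal{F}$ is invariant biseparable if it is asymmetric, complete and negatively transitive and satisfies: (continuity) for all $f,g,h$, $\{\alpha\in[0,1]:\alpha f+(1-\alpha)g\succ^* h\}$ and $\{\alpha\in[0,1]:h\succ^*\alpha f+(1-\alpha)g\}$ are open in $[0,1]$; (certainty independence) for all $f,g\in\mathcal{F}$, $x\in X$, $\alpha\in(0,1)$, $f\succ^* g$ iff $\alpha f+(1-\alpha)x\succ^*\alpha g+(1-\alpha)x$; (monotonicity) if $f(s)\succ^* g(s)$ for all $s\in S$ then $f\succ^* g$. *)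

From HB Require Import structures.
From mathcomp Require Import all_boot all_order all_algebra.
From mathcomp Require Import all_classical all_reals all_analysis.
Set Implicit Arguments. Unset Strict Implicit. Unset Printing Implicit Defensive.
Import Order.TTheory GRing.Theory Num.Theory.
Import numFieldNormedType.Exports.
Local Open Scope classical_set_scope.
Local Open Scope ring_scope.

Definition is_algebra {S : Type} (Sig : set (set S)) : Prop :=
  Sig setT /\ (forall A, Sig A -> Sig (~` A)) /\
  (forall A B, Sig A -> Sig B -> Sig (A `|` B)).

Definition convex_in {R : realType} {V : lmodType R} (X : set V) : Prop :=
  forall x y, X x -> X y -> forall t : R, 0 <= t <= 1 -> X (t *: x + (1 - t) *: y).

Definition is_act {R : realType} {V : lmodType R} {S : Type}
  (Sig : set (set S)) (X : set V) (f : S -> V) : Prop :=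
  (forall s, X (f s)) /\ finite_set (range f) /\ (forall x, Sig (f @^-1` [set x])).

Definition mix {R : realType} {V : lmodType R} {S : Type}
  (a : R) (f g : S -> V) : S -> V := fun s => a *: f s + (1 - a) *: g s.

Definition cst_act {V S : Type} (x : V) : S -> V := fun _ => x.

(* finitely additive probability measures on (S, Sig); values off Sig are
   normalized to 0, so that p is determined by its restriction to Sig *)
Definition fa_prob {R : realType} {S : Type} (Sig : set (set S)) (p : set S -> R) : Prop :=
  (forall A, Sig A -> 0 <= p A) /\ (forall A, ~ Sig A -> p A = 0) /\ p setT = 1 /\
  (forall A B, Sig A -> Sig B -> A `&` B = set0 -> p (A `|` B) = p A + p B).

Definition Delta {R : realType} {S : Type} (Sig : set (set S)) : set (set S -> R) :=
  [set p | fa_prob Sig p].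

(* weak* compactness: on Delta the weak* topology is the topology of
   setwise convergence p |-> p A (A in Sig), i.e. the product topology *)
Definition weak_star_compact {R : realType} {S : Type} (C : set (set S -> R)) : Prop :=
  @compact {ptws set S -> R} C.

Definition convex_meas {R : realType} {S : Type} (C : set (set S -> R)) : Prop :=
  forall p q, C p -> C q -> forall t : R, 0 <= t <= 1 ->
    C (fun A => t * p A + (1 - t) * q A).

Definition integ {R : realType} {V : lmodType R} {S : Type}
  (u : V -> R) (f : S -> V) (p : set S -> R) : R :=
  \sum_(x \in range f) u x * p (f @^-1` [set x]).

Definition minC {R : realType} {V : lmodType R} {S : Type}
  (C : set (set S -> R)) (u : V -> R) (f : S -> V) : R :=
  inf [set integ u f p | p in C].

Definition maxD {R : realType} {V : lmodType R} {S : Type}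
  (D : set (set S -> R)) (u : V -> R) (f : S -> V) : R :=
  sup [set integ u f p | p in D].

Definition affine_on {R : realType} {V : lmodType R} (X : set V) (u : V -> R) : Prop :=
  forall x y, X x -> X y -> forall t : R, 0 <= t <= 1 ->
    u (t *: x + (1 - t) *: y) = t * u x + (1 - t) * u y.

Definition nonconstant_on {R : realType} {V : lmodType R} (X : set V) (u : V -> R) : Prop :=
  exists x y, X x /\ X y /\ u x <> u y.

Definition HP_rep {R : realType} {V : lmodType R} {S : Type}
  (Sig : set (set S)) (X : set V) (pref : (S -> V) -> (S -> V) -> Prop)
  (u : V -> R) (C D : set (set S -> R)) : Prop :=
  affine_on X u /\ nonconstant_on X u /\
  C `<=` Delta Sig /\ D `<=` Delta Sig /\
  convex_meas C /\ convex_meas D /\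
  weak_star_compact C /\ weak_star_compact D /\
  (C `&` D) !=set0 /\
  (forall f g, is_act Sig X f -> is_act Sig X g ->
     (pref f g <-> minC C u f > minC C u g /\ maxD D u f > maxD D u g)).

Definition unique_HP_rep {R : realType} {V : lmodType R} {S : Type}
  (Sig : set (set S)) (X : set V) (pref : (S -> V) -> (S -> V) -> Prop)
  (u : V -> R) (C D : set (set S -> R)) : Prop :=
  HP_rep Sig X pref u C D /\
  (forall u' C' D', HP_rep Sig X pref u' C' D' ->
     (exists a b : R, 0 < a /\ forall x, X x -> u' x = a * u x + b) /\
     C' = C /\ D' = D).

Definition asymmetric_on {A : Type} (F : set A) (P : A -> A -> Prop) : Prop :=
  forall f g, F f -> F g -> P f g -> ~ P g f.

(* completeness of a strict relation: incomparability is transitive *)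
Definition complete_on {A : Type} (F : set A) (P : A -> A -> Prop) : Prop :=
  forall f g h, F f -> F g -> F h ->
    (~ P f g /\ ~ P g f) -> (~ P g h /\ ~ P h g) -> (~ P f h /\ ~ P h f).

Definition neg_transitive_on {A : Type} (F : set A) (P : A -> A -> Prop) : Prop :=
  forall f g h, F f -> F g -> F h -> ~ P f g -> ~ P g h -> ~ P f h.

Definition open_in_unit {R : realType} (A : R -> Prop) : Prop :=
  forall a, 0 <= a <= 1 -> A a ->
    exists e : R, 0 < e /\ forall b, 0 <= b <= 1 -> `|b - a| < e -> A b.

Definition invariant_biseparable {R : realType} {V : lmodType R} {S : Type}
  (Sig : set (set S)) (X : set V) (P : (S -> V) -> (S -> V) -> Prop) : Prop :=
  let F := is_act Sig X in
  asymmetric_on F P /\ complete_on F P /\ neg_transitive_on F P /\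
  (forall f g h, F f -> F g -> F h ->
     open_in_unit (fun a => P (mix a f g) h) /\
     open_in_unit (fun a => P h (mix a f g))) /\
  (forall f g x (a : R), F f -> F g -> X x -> 0 < a < 1 ->
     (P f g <-> P (mix a f (cst_act x)) (mix a g (cst_act x)))) /\
  (forall f g, F f -> F g ->
     (forall s, P (cst_act (f s)) (cst_act (g s))) -> P f g).

Definition extends_on {A : Type} (F : set A) (P Q : A -> A -> Prop) : Prop :=
  forall f g, F f -> F g -> P f g -> Q f g.

Definition alpha_val {R : realType} {V : lmodType R} {S : Type}
  (u : V -> R) (C D : set (set S -> R)) (a : R) (f : S -> V) : R :=
  a * minC C u f + (1 - a) * maxD D u f.

Definition alpha_rep {R : realType} {V : lmodType R} {S : Type}
  (Sig : set (set S)) (X : set V) (P : (S -> V) -> (S -> V) -> Prop)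
  (u : V -> R) (C D : set (set S -> R)) (a : R) : Prop :=
  forall f g, is_act Sig X f -> is_act Sig X g ->
    (P f g <-> alpha_val u C D a f > alpha_val u C D a g).

(* Write m f and M f for the minimum over C and the maximum over D of the
   expected utility of f.  Both are invariant functionals: they agree with u on
   constants, are affine under mixing with a constant, strictly monotone, and
   Lipschitz in mixture weights.  So is every a m + (1 - a) M, and the relation
   it represents is therefore invariant biseparable; it extends the
   hope-and-prepare relation since it is increasing in (m, M).
   Conversely, for an invariant biseparable extension, continuity and the
   connectedness of [0,1] give every act f a certainty equivalent y_f.  The
   extension ranks acts with equal (m, M) alike, and certainty independence
   makes u y_f move like m and M under mixing with constants; matching two
   non-degenerate acts by such mixtures shows that (M f - u y_f) / (M f - m f)
   is a constant a.  If the relation is not complete, some act has m f < M f,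
   and a constant valued between the two criteria separates two distinct a. *)

From Pilot Require Import Defs.
From HB Require Import structures.
From mathcomp Require Import all_boot all_order all_algebra.
From mathcomp Require Import all_classical all_reals all_analysis.
From mathcomp Require Import finmap ring lra.
Import Order.TTheory GRing.Theory Num.Theory.
Local Open Scope classical_set_scope.
Local Open Scope ring_scope.

Definition is_simple {S T : Type} (Sig : set (set S)) (h : S -> T) :=
  finite_set (range h) /\ forall y, Sig (h @^-1` [set y]).

Section Simple.
Context {S : Type} {Sig : set (set S)}.
Hypothesis alg : is_algebra Sig.

Lemma algebra_set0 : Sig set0.
Proof. by case: alg => hT [hC _]; rewrite -setCT; apply: hC. Qed.

Lemma algebra_setI A B : Sig A -> Sig B -> Sig (A `&` B).
Proof. by case: alg => _ [hC hU] hA hB; rewrite -[A `&` B]setCK setCI; auto. Qed.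

Lemma preimage_seq_cons {T : eqType} (h : S -> T) y (s : seq T) :
  h @^-1` [set` y :: s] = h @^-1` [set y] `|` h @^-1` [set` s].
Proof.
apply/seteqP; split=> x /=; rewrite inE; first by case/orP=> [/eqP|]; [left|right].
by case=> [->|->]; rewrite ?eqxx ?orbT.
Qed.

Lemma algebra_preimage_seq {T : eqType} (h : S -> T) (s : seq T) :
  (forall y, Sig (h @^-1` [set y])) -> Sig (h @^-1` [set` s]).
Proof.
move=> hm; elim: s => [|y s IH].
  rewrite (_ : _ @^-1` _ = set0); [exact: algebra_set0|by apply/seteqP; split].
by rewrite preimage_seq_cons; case: alg => _ [_ hU]; apply: hU.
Qed.

Lemma preimage_comp_fibers {T U : choiceType} (h : S -> T) (k : T -> U) x :
  finite_set (range h) ->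
  (k \o h) @^-1` [set x] = h @^-1` [set` [seq y <- fset_set (range h) | k y == x]].
Proof.
move=> hf; apply/seteqP; split=> s /=.
  by move=> <-; rewrite mem_filter eqxx in_fset_set //=; apply/mem_set; exists s.
by rewrite mem_filter => /andP[/eqP].
Qed.

Lemma is_simple_comp {T U : choiceType} {h : S -> T} (k : T -> U) :
  is_simple Sig h -> is_simple Sig (k \o h).
Proof.
case=> hf hm; split; first by rewrite -(image_comp h k); apply: finite_image.
by move=> x; rewrite preimage_comp_fibers //; apply: algebra_preimage_seq.
Qed.

Lemma is_simple_pair {T U : Type} {f : S -> T} {g : S -> U} :
  is_simple Sig f -> is_simple Sig g -> is_simple Sig (fun s => (f s, g s)).
Proof.
case=> ff fm [gf gm]; split.
  by apply: sub_finite_set (finite_setX ff gf) => _ [s _ <-]; split; exists s.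
move=> [a b]; rewrite (_ : _ @^-1` _ = f @^-1` [set a] `&` g @^-1` [set b]).
  exact: algebra_setI.
by apply/seteqP; split=> s /= [-> ->].
Qed.

Lemma is_simple_cst {T : Type} (x : T) : is_simple Sig (fun _ : S => x).
Proof.
split; first by apply: sub_finite_set (finite_set1 x) => _ [s _ <-].
move=> y; have [<-|nxy] := pselect (x = y).
  by rewrite (_ : _ @^-1` _ = setT); [case: alg|apply/seteqP].
rewrite (_ : _ @^-1` _ = set0); [exact: algebra_set0|by apply/seteqP; split].
Qed.

End Simple.

Lemma finite_range_argmax {R : realType} {T : Type} (F : T -> R) (t0 : T) :
  finite_set (range F) -> exists t1, forall t, F t <= F t1.
Proof.
move=> fin; pose mx := \big[Num.max/F t0]_(y <- fset_set (range F)) y.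
have [t1 _ Emx] : range F mx.
  rewrite /mx big_seq; apply: big_ind => [|x y Rx Ry|y]; first by exists t0.
    by case: leP.
  by rewrite in_fset_set // => /set_mem.
exists t1 => t; rewrite Emx /mx; apply: le_bigmax_seq => //.
by rewrite in_fset_set //; apply/mem_set; exists t.
Qed.

Definition expect {R : realType} {S : Type} {T : choiceType} (p : set S -> R)
    (h : S -> T) (F : T -> R) :=
  \sum_(y \in range h) F y * p (h @^-1` [set y]).

Section Expectation.
Context {R : realType} {S : Type} {Sig : set (set S)} {p : set S -> R}.
Hypotheses (alg : is_algebra Sig) (hp : fa_prob Sig p).

Lemma fa_prob0 : p set0 = 0.
Proof.
case: hp => _ [_ [_ hadd]].
have := hadd set0 set0 (algebra_set0 alg) (algebra_set0 alg) (setI0 _).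
by rewrite setU0 => /eqP; rewrite -subr_eq subrr eq_sym => /eqP.
Qed.

Lemma fa_prob_nonempty : [set: S] !=set0.
Proof.
apply: contrapT => /set0P/negP/negPn/eqP S0.
by case: hp => _ [_ [+ _]]; rewrite S0 fa_prob0 => /eqP; rewrite eq_sym oner_eq0.
Qed.

Lemma fa_prob_preimage_seq {T : eqType} (h : S -> T) (s : seq T) :
  (forall y, Sig (h @^-1` [set y])) -> uniq s ->
  p (h @^-1` [set` s]) = \sum_(y <- s) p (h @^-1` [set y]).
Proof.
move=> hm; elim: s => [_|y s IH /andP[yNs us]].
  by rewrite big_nil -fa_prob0; congr p; apply/seteqP; split.
rewrite preimage_seq_cons big_cons -IH //; case: hp => _ [_ [_ ->]] //.
  exact: algebra_preimage_seq.
by apply/seteqP; split=> x // [/= -> ys]; move/negP: yNs.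
Qed.

Lemma expect_cst {T : choiceType} {h : S -> T} c : is_simple Sig h -> expect p h (fun=> c) = c.
Proof.
case=> hf hm; rewrite /expect -mulr_fsumr fsbig_finite //.
rewrite -fa_prob_preimage_seq ?fset_uniq // (_ : _ @^-1` _ = setT).
  by case: hp => _ [_ [-> _]]; rewrite mulr1.
by apply/seteqP; split=> s // _; rewrite /= in_fset_set //; apply/mem_set; exists s.
Qed.

Lemma expect_eq {T : choiceType} (h : S -> T) (F G : T -> R) :
  (forall s, F (h s) = G (h s)) -> expect p h F = expect p h G.
Proof. by move=> hFG; apply: eq_fsbigr => _ /set_mem [s _ <-]; rewrite hFG. Qed.

Lemma expect_le {T : choiceType} (h : S -> T) (F G : T -> R) : is_simple Sig h ->
  (forall s, F (h s) <= G (h s)) -> expect p h F <= expect p h G.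
Proof.
case=> hf hm hFG; rewrite /expect !fsbig_finite // big_seq [leRHS]big_seq.
apply: ler_sum => y; rewrite in_fset_set // => /set_mem [s _ <-].
by apply: ler_wpM2r; [case: hp => -> |exact: hFG].
Qed.

Lemma expectD {T : choiceType} (h : S -> T) (F G : T -> R) : finite_set (range h) ->
  expect p h (fun y => F y + G y) = expect p h F + expect p h G.
Proof.
by move=> hf; rewrite /expect -fsbig_split //; apply: eq_fsbigr => y _; rewrite mulrDl.
Qed.

Lemma expectZ {T : choiceType} (h : S -> T) (F : T -> R) a :
  expect p h (fun y => a * F y) = a * expect p h F.
Proof. by rewrite /expect mulr_fsumr; apply: eq_fsbigr => y _; rewrite mulrA. Qed.

Lemma expect_comp {T U : choiceType} {h : S -> T} (k : T -> U) {F : U -> R} :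
  is_simple Sig h -> expect p (k \o h) F = expect p h (F \o k).
Proof.
case=> hf hm; rewrite /expect -(image_comp h k) fsbig_finite; last exact: finite_image.
rewrite fsbig_finite // fset_set_image // [RHS](partition_big_imfset _ k).
apply: eq_big_seq => x _; rewrite preimage_comp_fibers // fa_prob_preimage_seq //.
  by rewrite mulr_sumr big_filter; apply: eq_bigr => y /eqP <-.
by apply: filter_uniq; apply: fset_uniq.
Qed.

End Expectation.

Section Acts.
Context {R : realType} {V : lmodType R} {S : Type} {Sig : set (set S)} {X : set V}.
Hypothesis alg : is_algebra Sig.

Lemma cst_is_act {x} : X x -> is_act Sig X (@cst_act V S x).
Proof. by move=> Xx; split=> //; apply: is_simple_cst. Qed.

Lemma mix_is_act (a : R) f g : convex_in X -> 0 <= a <= 1 ->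
  is_act Sig X f -> is_act Sig X g -> is_act Sig X (mix a f g).
Proof.
move=> hX ha [fX sf] [gX sg]; split; first by move=> s; apply: hX.
exact (is_simple_comp alg (fun y : V * V => a *: y.1 + (1 - a) *: y.2)
  (is_simple_pair alg sf sg)).
Qed.

End Acts.

Section Integral.
Context {R : realType} {V : lmodType R} {S : Type} {Sig : set (set S)} {X : set V}.
Context {p : set S -> R} {u : V -> R}.
Hypotheses (alg : is_algebra Sig) (hp : fa_prob Sig p).

Lemma integE f : integ u f p = expect p f u.
Proof. by []. Qed.

Lemma integ_opp f : integ (fun x => - u x) f p = - integ u f p.
Proof. by rewrite !integE -mulN1r -expectZ; apply: expect_eq => s; rewrite mulN1r. Qed.

Lemma integ_cst x : integ u (cst_act x) p = u x.
Proof.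
rewrite integE -[RHS](expect_cst alg hp (u x) (is_simple_cst alg x)).
exact: expect_eq.
Qed.

Lemma integ_le f c : is_simple Sig f -> (forall s, u (f s) <= c) -> integ u f p <= c.
Proof.
move=> sf hc; rewrite integE -[leRHS](expect_cst alg hp c sf).
by apply: (expect_le hp).
Qed.

Lemma integ_ge f c : is_simple Sig f -> (forall s, c <= u (f s)) -> c <= integ u f p.
Proof.
move=> sf hc; rewrite integE -[leLHS](expect_cst alg hp c sf).
by apply: (expect_le hp).
Qed.

Lemma integ_shift_le f g d : is_simple Sig f -> is_simple Sig g ->
  (forall s, u (g s) + d <= u (f s)) -> integ u g p + d <= integ u f p.
Proof.
move=> sf sg hd; have sfg := is_simple_pair alg sf sg.
rewrite !integE (expect_comp alg hp snd sfg) (expect_comp alg hp fst sfg).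
rewrite -[in leLHS](expect_cst alg hp d sfg) -expectD; last by case: sfg.
by apply: (expect_le hp).
Qed.

Lemma integ_mix (a : R) f g : affine_on X u -> 0 <= a <= 1 ->
  is_act Sig X f -> is_act Sig X g ->
  integ u (mix a f g) p = a * integ u f p + (1 - a) * integ u g p.
Proof.
move=> haff ha [fX sf] [gX sg]; have sfg := is_simple_pair alg sf sg.
rewrite !integE (expect_comp alg hp snd sfg) (expect_comp alg hp fst sfg).
rewrite (expect_comp alg hp (fun y : V * V => a *: y.1 + (1 - a) *: y.2) sfg).
rewrite -!expectZ -expectD; last by case: sfg.
by apply: expect_eq => s; exact: haff (fX s) (gX s) a ha.
Qed.

End Integral.

Lemma mix1 {R : realType} {V : lmodType R} {S : Type} (f g : S -> V) : mix 1 f g = f.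
Proof. by apply: funext => s; rewrite /mix subrr scale0r addr0 scale1r. Qed.

Lemma mix0 {R : realType} {V : lmodType R} {S : Type} (f g : S -> V) : mix 0 f g = g.
Proof. by apply: funext => s; rewrite /mix subr0 scale0r add0r scale1r. Qed.

Lemma sup_affine {R : realType} (E : set R) (a b : R) : 0 < a -> has_sup E ->
  sup [set a * x + b | x in E] = a * sup E + b.
Proof.
move=> a0 [[x0 Ex0] [M hM]].
have ubE : has_ubound [set a * x + b | x in E].
  by exists (a * M + b) => _ [x Ex <-]; rewrite lerD2r ler_pM2l // hM.
apply/eqP; rewrite eq_le; apply/andP; split.
  apply: ge_sup; first by exists (a * x0 + b), x0.
  by move=> _ [x Ex <-]; rewrite lerD2r ler_pM2l //; apply: ub_le_sup => //; exists M.
rewrite -lerBrDr -ler_pdivlMl //; apply: ge_sup; first by exists x0.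
by move=> x Ex; rewrite ler_pdivlMl // lerBrDr; apply: ub_le_sup => //; exists x.
Qed.

Lemma mix_diff_le {R : realType} (x y a b K : R) : 0 <= K -> `|x - y| <= K ->
  a * x + (1 - a) * y <= b * x + (1 - b) * y + K * `|a - b|.
Proof.
move=> K0 hK; rewrite -lerBlDl (_ : _ - _ = (a - b) * (x - y)); last by ring.
by apply: le_trans (ler_norm _) _; rewrite normrM mulrC ler_wpM2r.
Qed.

Definition alpha_maxmin {R : realType} {T : Type} (m M : T -> R) (a : R) (f : T) :=
  a * m f + (1 - a) * M f.

Lemma lt_convex {R : realType} (a x x' y y' : R) : 0 <= a <= 1 ->
  x < x' -> y < y' -> a * x + (1 - a) * y < a * x' + (1 - a) * y'.
Proof.
move=> /andP[a0 a1] hx hy; have := ler_wpM2l a0 (ltW hx).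
have [->|a_neq1] := eqVneq a 1; first by rewrite subrr !mul0r !addr0 !mul1r.
have : (1 - a) * y < (1 - a) * y' by rewrite ltr_pM2l // subr_gt0 lt_neqAle a_neq1.
lra.
Qed.

Record invariant_functional {R : realType} {V : lmodType R} {S : Type}
    (Sig : set (set S)) (X : set V) (u : V -> R) (Phi : (S -> V) -> R) : Prop := {
  ifun_cst : forall x, X x -> Phi (cst_act x) = u x;
  ifun_mix_cst : forall f z (a : R), is_act Sig X f -> X z -> 0 < a <= 1 ->
    Phi (mix a f (cst_act z)) = a * Phi f + (1 - a) * u z;
  ifun_bounds : forall f, is_act Sig X f ->
    exists s1 s2, u (f s1) <= Phi f <= u (f s2);
  ifun_lt : forall f g, is_act Sig X f -> is_act Sig X g ->
    (forall s, u (g s) < u (f s)) -> Phi g < Phi f;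
  ifun_lipschitz : forall f g, is_act Sig X f -> is_act Sig X g ->
    exists2 K : R, 0 <= K & forall a b : R, 0 <= a <= 1 -> 0 <= b <= 1 ->
      Phi (mix a f g) <= Phi (mix b f g) + K * `|a - b| }.

Arguments ifun_cst {R V S Sig X u Phi}.
Arguments ifun_mix_cst {R V S Sig X u Phi}.
Arguments ifun_bounds {R V S Sig X u Phi}.
Arguments ifun_lt {R V S Sig X u Phi}.
Arguments ifun_lipschitz {R V S Sig X u Phi}.

Section InvariantFunctionalTheory.
Context {R : realType} {V : lmodType R} {S : Type} {Sig : set (set S)} {X : set V}.
Context {u : V -> R}.

Lemma ifun_opp {Phi} : invariant_functional Sig X (fun x => - u x) Phi ->
  invariant_functional Sig X u (fun f => - Phi f).
Proof.
case=> hcst hmix hbnd hlt hlip; split.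
- by move=> x Xx; rewrite hcst ?opprK.
- by move=> f z a hf Xz ha; rewrite hmix //; ring.
- move=> f hf; have [s1 [s2 /andP[h1 h2]]] := hbnd f hf.
  by exists s2, s1; rewrite lerNr h2 lerNl h1.
- by move=> f g hf hg hfg; rewrite ltrN2; apply: hlt => // s; rewrite ltrN2.
- move=> f g hf hg; have [K K0 hK] := hlip f g hf hg; exists K => // a b ha hb.
  by have := hK b a hb ha; rewrite distrC; lra.
Qed.

Lemma ifun_convex {m M} {a : R} : invariant_functional Sig X u m ->
  invariant_functional Sig X u M -> 0 <= a <= 1 ->
  invariant_functional Sig X u (alpha_maxmin m M a).
Proof.
move=> Hm HM ha; have /andP[a0 a1] := ha; have a1' : 0 <= 1 - a by rewrite subr_ge0.
rewrite /alpha_maxmin; split.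
- by move=> x Xx; rewrite (ifun_cst Hm) ?(ifun_cst HM) //; ring.
- by move=> f z b hf Xz hb; rewrite (ifun_mix_cst Hm) ?(ifun_mix_cst HM) //; ring.
- move=> f hf; have [m1 [m2 /andP[hm1 hm2]]] := ifun_bounds Hm f hf.
  have [M1 [M2 /andP[hM1 hM2]]] := ifun_bounds HM f hf.
  have [s1 [h1 h1']] : exists s1, u (f s1) <= m f /\ u (f s1) <= M f.
    by case: (leP (u (f m1)) (u (f M1))) => h; [exists m1|exists M1]; split; lra.
  have [s2 [h2 h2']] : exists s2, m f <= u (f s2) /\ M f <= u (f s2).
    by case: (leP (u (f m2)) (u (f M2))) => h; [exists M2|exists m2]; split; lra.
  by exists s1, s2; apply/andP; split; nra.
- move=> f g hf hg hfg.
  by apply: lt_convex => //; [apply: (ifun_lt Hm)|apply: (ifun_lt HM)].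
- move=> f g hf hg; have [K1 K10 h1] := ifun_lipschitz Hm f g hf hg.
  have [K2 K20 h2] := ifun_lipschitz HM f g hf hg.
  exists (a * K1 + (1 - a) * K2) => [|b c hb hc]; first by rewrite addr_ge0 ?mulr_ge0.
  have := ler_wpM2l a0 (h1 b c hb hc); have := ler_wpM2l a1' (h2 b c hb hc).
  by nra.
Qed.

End InvariantFunctionalTheory.

Section SupOfIntegrals.
Context {R : realType} {V : lmodType R} {S : Type} {Sig : set (set S)} {X : set V}.
Hypotheses (alg : is_algebra Sig) (hX : convex_in X).
Variables (D : set (set S -> R)) (u : V -> R).
Hypotheses (hD : D `<=` Delta Sig) (hDn : D !=set0) (haff : affine_on X u).

Lemma simple_argmax {T : choiceType} (h : S -> T) (F : T -> R) :
  is_simple Sig h -> exists s1, forall s, F (h s) <= F (h s1).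
Proof.
case: hDn => p /hD hp [hf _]; have [s0 _] := fa_prob_nonempty alg hp.
apply: (finite_range_argmax (F \o h) s0).
by rewrite -(image_comp h F); apply: finite_image.
Qed.

Lemma maxD_ub f p : is_act Sig X f -> D p -> integ u f p <= maxD D u f.
Proof.
move=> [_ sf] Dp; apply: ub_le_sup; last by exists p.
have [s2 hs2] := simple_argmax f u sf.
by exists (u (f s2)) => _ [q Dq <-]; apply: (integ_le alg (hD _ Dq)).
Qed.

Lemma maxD_le f c : (forall p, D p -> integ u f p <= c) -> maxD D u f <= c.
Proof.
move=> hc; apply: ge_sup => [|_ [p Dp <-]]; last exact: hc.
by case: hDn => p Dp; exists (integ u f p), p.
Qed.

Lemma maxD_cst x : maxD D u (cst_act x) = u x.
Proof.
rewrite /maxD (_ : [set _ | p in D] = [set u x]) ?sup1 //.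
apply/seteqP; split=> [_ [p Dp <-]|_ ->]; first by rewrite /= (integ_cst alg (hD _ Dp)).
by case: hDn => p Dp; exists p; rewrite ?(integ_cst alg (hD _ Dp)).
Qed.

Lemma maxD_mix_cst f z (a : R) : is_act Sig X f -> X z -> 0 < a <= 1 ->
  maxD D u (mix a f (cst_act z)) = a * maxD D u f + (1 - a) * u z.
Proof.
move=> hf Xz /andP[a0 a1]; rewrite /maxD -sup_affine //; last first.
  split; first by case: hDn => p Dp; exists (integ u f p), p.
  by exists (maxD D u f) => _ [p Dp <-]; apply: maxD_ub.
rewrite image_comp; congr sup; apply: eq_imagel => p Dp /=.
rewrite (integ_mix alg (hD _ Dp) _ _ _ haff _ hf (cst_is_act alg Xz)).
rewrite ?(integ_cst alg (hD _ Dp)) //.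
by rewrite ltW.
Qed.

Lemma maxD_bounds f : is_act Sig X f -> exists s1 s2, u (f s1) <= maxD D u f <= u (f s2).
Proof.
move=> hf; case: (hDn) => p Dp.
have [s1 hs1] := simple_argmax f (fun x => - u x) hf.2.
have [s2 hs2] := simple_argmax f u hf.2.
exists s1, s2; apply/andP; split; last first.
  by apply: maxD_le => q Dq; apply: (integ_le alg (hD _ Dq) _ _ hf.2).
apply: le_trans (maxD_ub f p hf Dp).
by apply: (integ_ge alg (hD _ Dp) _ _ hf.2) => s; rewrite -lerN2.
Qed.

Lemma maxD_lt f g : is_act Sig X f -> is_act Sig X g ->
  (forall s, u (g s) < u (f s)) -> maxD D u g < maxD D u f.
Proof.
move=> hf hg hlt; have sfg := is_simple_pair alg hf.2 hg.2.
have [s1 hs1] := simple_argmax _ (fun y : V * V => u y.2 - u y.1) sfg.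
set d := u (f s1) - u (g s1).
have d0 : 0 < d by rewrite subr_gt0.
have hd s : u (g s) + d <= u (f s) by have := hs1 s; rewrite /= /d; lra.
apply: (@lt_le_trans _ _ (maxD D u g + d)); first by rewrite ltrDl.
rewrite -lerBrDr; apply: maxD_le => p Dp; rewrite lerBrDr.
exact: le_trans (integ_shift_le alg (hD _ Dp) _ _ _ hf.2 hg.2 hd) (maxD_ub f p hf Dp).
Qed.

Lemma maxD_lipschitz f g : is_act Sig X f -> is_act Sig X g ->
  exists2 K, 0 <= K & forall a b : R, 0 <= a <= 1 -> 0 <= b <= 1 ->
    maxD D u (mix a f g) <= maxD D u (mix b f g) + K * `|a - b|.
Proof.
move=> hf hg.
have [f1 hf1] := simple_argmax f (fun x => - u x) hf.2.
have [f2 hf2] := simple_argmax f u hf.2.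
have [g1 hg1] := simple_argmax g (fun x => - u x) hg.2.
have [g2 hg2] := simple_argmax g u hg.2.
set K : R := `|u (f f2) - u (g g1)| + `|u (g g2) - u (f f1)|.
have K0 : 0 <= K by rewrite addr_ge0.
exists K => // a b ha hb; apply: maxD_le => p Dp; have hp := hD _ Dp.
apply: (@le_trans _ _ (integ u (mix b f g) p + K * `|a - b|)); last first.
  by rewrite lerD2r maxD_ub //; apply: mix_is_act.
rewrite !(integ_mix alg hp _ _ _ haff) //.
have lf : u (f f1) <= integ u f p.
  by apply: (integ_ge alg hp _ _ hf.2) => s; rewrite -lerN2.
have lg : u (g g1) <= integ u g p.
  by apply: (integ_ge alg hp _ _ hg.2) => s; rewrite -lerN2.
have uf := integ_le alg hp _ _ hf.2 hf2.
have ug := integ_le alg hp _ _ hg.2 hg2.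
have hK : `|integ u f p - integ u g p| <= K.
  have := ler_norm (u (f f2) - u (g g1)); have := ler_norm (u (g g2) - u (f f1)).
  have := normr_ge0 (u (f f2) - u (g g1)); have := normr_ge0 (u (g g2) - u (f f1)).
  by rewrite ler_norml /K; move=> *; apply/andP; split; lra.
exact (mix_diff_le _ _ _ _ _ K0 hK).
Qed.

Lemma maxD_invariant : invariant_functional Sig X u (maxD D u).
Proof.
split; [by move=> x _; apply: maxD_cst | exact: maxD_mix_cst | exact: maxD_bounds |
        exact: maxD_lt | exact: maxD_lipschitz].
Qed.

End SupOfIntegrals.

(* [Defs.minC]: the bare name [minC] denotes Order's commutativity of [min]. *)
Lemma minCE {R : realType} {V : lmodType R} {S : Type} (C : set (set S -> R)) (u : V -> R) :
  Defs.minC C u = fun f => - maxD C (fun x => - u x) f.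
Proof.
apply: funext => f; rewrite /Defs.minC /maxD /inf image_comp; congr (- sup _).
by apply: eq_imagel => p _ /=; rewrite integ_opp.
Qed.

Lemma affine_on_opp {R : realType} {V : lmodType R} {X : set V} {u : V -> R} :
  affine_on X u -> affine_on X (fun x => - u x).
Proof. by move=> haff x y Xx Xy t ht; rewrite haff //; ring. Qed.

Lemma minC_invariant {R : realType} {V : lmodType R} {S : Type} {Sig : set (set S)}
    {X : set V} (C : set (set S -> R)) (u : V -> R) :
  is_algebra Sig -> convex_in X -> C `<=` Delta Sig -> C !=set0 -> affine_on X u ->
  invariant_functional Sig X u (Defs.minC C u).
Proof.
move=> alg hX hC hCn haff; rewrite minCE; apply: ifun_opp.
exact: maxD_invariant alg hX _ _ hC hCn (affine_on_opp haff).
Qed.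

Lemma minC_le_maxD {R : realType} {V : lmodType R} {S : Type} {Sig : set (set S)}
    {X : set V} (C D : set (set S -> R)) (u : V -> R) f :
  is_algebra Sig -> C `<=` Delta Sig -> D `<=` Delta Sig -> C `&` D !=set0 ->
  is_act Sig X f -> Defs.minC C u f <= maxD D u f.
Proof.
move=> alg hC hD [p [Cp Dp]] hf; rewrite minCE lerNl.
have := maxD_ub alg C (fun x => - u x) hC (ex_intro _ p Cp) f p hf Cp.
rewrite integ_opp => hCp; apply: le_trans hCp.
by rewrite lerN2; apply: (maxD_ub alg D u hD (ex_intro _ p Dp) f p hf Dp).
Qed.

Lemma open_in_unit_lipschitz {R : realType} (phi : R -> R) (K c : R) : 0 <= K ->
  (forall a b, 0 <= a <= 1 -> 0 <= b <= 1 -> phi a <= phi b + K * `|a - b|) ->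
  open_in_unit (fun a => c < phi a).
Proof.
move=> K0 hK a ha hca; have K1 : 0 < K + 1 by lra.
exists ((phi a - c) / (K + 1)); split; first by rewrite divr_gt0 // subr_gt0.
move=> b hb hba; have := hK a b ha hb; rewrite distrC in hba.
have : K * `|a - b| <= K * ((phi a - c) / (K + 1)) by rewrite ler_wpM2l // ltW.
have : 0 < (phi a - c) / (K + 1) by rewrite divr_gt0 // subr_gt0.
have -> : K * ((phi a - c) / (K + 1)) = phi a - c - (phi a - c) / (K + 1).
  by field; rewrite lt0r_neq0.
lra.
Qed.

Definition represents {R : realType} {V : lmodType R} {S : Type}
    (Sig : set (set S)) (X : set V) (P : (S -> V) -> (S -> V) -> Prop)
    (Phi : (S -> V) -> R) :=
  forall f g, is_act Sig X f -> is_act Sig X g -> (P f g <-> Phi g < Phi f).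

Section Representation.
Context {R : realType} {V : lmodType R} {S : Type} {Sig : set (set S)} {X : set V}.
Hypotheses (alg : is_algebra Sig) (hX : convex_in X).
Context {u : V -> R}.

Lemma represents_invariant_biseparable {Phi P} :
  invariant_functional Sig X u Phi -> represents Sig X P Phi ->
  invariant_biseparable Sig X P.
Proof.
move=> HPhi hrep; split; [|split; [|split; [|split; [|split]]]].
- by move=> f g hf hg /(hrep _ _ hf hg) H /(hrep _ _ hg hf); lra.
- move=> f g h hf hg hh; rewrite !hrep // => -[n1 n2] [n3 n4].
  by split=> H; [apply: n2|apply: n1]; lra.
- by move=> f g h hf hg hh; rewrite !hrep //; lra.
- move=> f g h hf hg hh; have [K K0 hK] := ifun_lipschitz HPhi f g hf hg.
  have mixF a : 0 <= a <= 1 -> is_act Sig X (mix a f g) by move=> ?; apply: mix_is_act.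
  split=> a ha.
    move=> /(hrep _ _ (mixF a ha) hh) H.
    have [e [e0 he]] := open_in_unit_lipschitz _ _ (Phi h) K0 hK a ha H.
    by exists e; split=> // b hb hba; apply/(hrep _ _ (mixF b hb) hh); apply: he.
  move=> /(hrep _ _ hh (mixF a ha)) H.
  have hK' a' b' : 0 <= a' <= 1 -> 0 <= b' <= 1 ->
      - Phi (mix a' f g) <= - Phi (mix b' f g) + K * `|a' - b'|.
    by move=> ha' hb'; have := hK b' a' hb' ha'; rewrite distrC; lra.
  have H' : - Phi h < - Phi (mix a f g) by rewrite ltrN2.
  have [e [e0 he]] := open_in_unit_lipschitz _ _ _ K0 hK' a ha H'.
  by exists e; split=> // b hb hba; apply/(hrep _ _ hh (mixF b hb)); rewrite -ltrN2; apply: he.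
- move=> f g x a hf hg Xx /andP[a0 a1]; have ha : 0 < a <= 1 by rewrite a0 ltW.
  have ha' : 0 <= a <= 1 by rewrite ltW // ltW.
  rewrite (hrep _ _ hf hg) hrep; try by apply: mix_is_act => //; apply: cst_is_act.
  by rewrite !(ifun_mix_cst HPhi) // ltrD2r ltr_pM2l.
- move=> f g hf hg hfg; apply/(hrep _ _ hf hg); apply: (ifun_lt HPhi) => // s.
  have := iffLR (hrep _ _ (cst_is_act alg (hf.1 s)) (cst_is_act alg (hg.1 s))) (hfg s).
  by rewrite (ifun_cst HPhi _ (hf.1 s)) (ifun_cst HPhi _ (hg.1 s)).
Qed.

End Representation.

Lemma exists_pos_below2 {R : realType} {x y : R} : 0 < x -> 0 < y ->
  exists2 d, 0 < d & d < x /\ d < y.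
Proof.
by move=> x0 y0; case: (leP x y) => h; [exists (x / 2)|exists (y / 2)]; try split; lra.
Qed.

Lemma open_in_unit_near1 {R : realType} {A : R -> Prop} :
  open_in_unit A -> A 1 -> exists2 a, 0 < a < 1 & A a.
Proof.
move=> oA A1; have u1 : 0 <= (1 : R) <= 1 by rewrite ler01 lexx.
have [e [e0 he]] := oA 1 u1 A1.
have [d d0 [de d1]] := exists_pos_below2 e0 ltr01.
exists (1 - d); first by apply/andP; split; lra.
by apply: he; [apply/andP; split; lra|rewrite addrAC subrr add0r normrN ger0_norm ?ltW].
Qed.

Lemma open_in_unit_gap {R : realType} {A B : R -> Prop} :
  open_in_unit A -> open_in_unit B -> A 1 -> B 0 ->
  (forall t, 0 <= t <= 1 -> A t -> B t -> False) ->
  exists t, 0 <= t <= 1 /\ ~ A t /\ ~ B t.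
Proof.
move=> oA oB A1 B0 AB; apply: contrapT => hn.
have hAB t : 0 <= t <= 1 -> A t \/ B t.
  by move=> ht; apply: contrapT => /not_orP[nA nB]; apply: hn; exists t.
pose T := [set t : R | 0 <= t <= 1 /\ B t].
have T0 : T 0 by split; rewrite ?lexx ?ler01.
have hs : has_sup T by split; [exists 0|exists 1 => t [/andP[_ ?] _]].
have s01 : 0 <= sup T <= 1.
  rewrite (ub_le_sup hs.2 T0); apply: ge_sup => [|t [/andP[_ ?] _] //].
  by exists 0.
case: (hAB _ s01) => [As|Bs].
  have [e [e0 he]] := oA _ s01 As.
  have [t [/andP[t0 t1] Bt] lt] := sup_adherent e0 hs.
  have ts : t <= sup T by apply: (ub_le_sup hs.2); split; rewrite ?t0.
  apply: (AB t); rewrite ?t0 //; apply: he; first by rewrite t0.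
  by rewrite distrC ger0_norm ?subr_ge0 //; lra.
have [e [e0 he]] := oB _ s01 Bs.
have [s1|s_lt1] := eqVneq (sup T) 1; first by apply: (AB 1); rewrite ?lexx ?ler01 // -s1.
have s1' : 0 < 1 - sup T by rewrite subr_gt0 lt_neqAle s_lt1; case/andP: s01.
have [d d0 [de ds]] := exists_pos_below2 e0 s1'.
have : sup T + d <= sup T.
  apply: (ub_le_sup hs.2); split; first by apply/andP; split; lra.
  by apply: he; [apply/andP; split; lra|rewrite addrAC subrr add0r ger0_norm ?ltW].
lra.
Qed.

Lemma affine_ivt {R : realType} {V : lmodType R} {X : set V} {u : V -> R} {x1 x2 c} :
  convex_in X -> affine_on X u -> X x1 -> X x2 -> u x1 <= c <= u x2 ->
  exists2 x, X x & u x = c.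
Proof.
move=> hX haff X1 X2 /andP[h1 h2].
have [e|ne] := eqVneq (u x1) (u x2); first by exists x1 => //; lra.
have d0 : 0 < u x2 - u x1 by rewrite subr_gt0 lt_neqAle ne (le_trans h1 h2).
set t := (c - u x1) / (u x2 - u x1).
have ht : 0 <= t <= 1.
  by apply/andP; split; [apply: divr_ge0; lra|rewrite ler_pdivrMr // mul1r; lra].
exists (t *: x2 + (1 - t) *: x1); first exact: hX.
by rewrite haff // /t; field; rewrite lt0r_neq0.
Qed.

Lemma small_mix_weight {R : realType} {k r : R} (J : R) : 0 < k -> 0 < r ->
  exists2 e, 0 < e < 1 & e * k < 1 /\ `|e * J| <= r * (1 - e).
Proof.
move=> k0 r0; have h2 : 0 < (2^-1 : R) by rewrite invr_gt0.
have k1 : 0 < k^-1 by rewrite invr_gt0.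
have [d1 d10 [d12 d1k]] := exists_pos_below2 h2 k1.
have rJ : 0 < r / (2 * `|J| + 1) by rewrite divr_gt0 // ltr_wpDl // mulr_ge0.
have [e e0 [ed1 eJ]] := exists_pos_below2 d10 rJ.
exists e; first by apply/andP; split; lra.
split; first by rewrite -(mulVf (lt0r_neq0 k0)) ltr_pM2r //; lra.
rewrite ltr_pdivlMr ?ltr_wpDl ?mulr_ge0 // in eJ.
have : r * e <= r * 2^-1 by rewrite ler_pM2l //; lra.
by rewrite normrM gtr0_norm //; have := normr_ge0 J; nra.
Qed.

Definition indiff {A : Type} (P : A -> A -> Prop) f g := ~ P f g /\ ~ P g f.

Section StrictWeakOrder.
Context {A : Type} {F : set A} {P : A -> A -> Prop}.
Hypotheses (Pasym : asymmetric_on F P) (Pneg : neg_transitive_on F P).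
Local Notation indiff := (indiff P).

Lemma neg_transitive_split {f g h} : F f -> F g -> F h -> P f h -> P f g \/ P g h.
Proof.
move=> hf hg hh hfh; apply: contrapT => /not_orP[nfg ngh].
exact: Pneg hf hg hh nfg ngh hfh.
Qed.

Lemma asym_neg_transitive_trans {f g h} : F f -> F g -> F h -> P f g -> P g h -> P f h.
Proof.
move=> hf hg hh hfg hgh; case: (neg_transitive_split hf hh hg hfg) => // hhg.
by case: (Pasym _ _ hg hh hgh hhg).
Qed.

Lemma indiff_trans {f g h} : F f -> F g -> F h -> indiff f g -> indiff g h -> indiff f h.
Proof.
move=> hf hg hh [n1 n2] [n3 n4].
by split=> H; [case: (neg_transitive_split hf hg hh H)|case: (neg_transitive_split hh hg hf H)].
Qed.

Lemma indiff_prefl {f g h} : F f -> F g -> F h -> indiff f g -> (P f h <-> P g h).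
Proof.
move=> hf hg hh [n1 n2].
by split=> H; [case: (neg_transitive_split hf hg hh H)|case: (neg_transitive_split hg hf hh H)].
Qed.

Lemma indiff_prefr {f g h} : F f -> F g -> F h -> indiff f g -> (P h f <-> P h g).
Proof.
move=> hf hg hh [n1 n2].
by split=> H; [case: (neg_transitive_split hh hg hf H)|case: (neg_transitive_split hh hf hg H)].
Qed.

End StrictWeakOrder.

Section HopeAndPrepare.
Context {R : realType} {V : lmodType R} {S : Type} {Sig : set (set S)} {X : set V}.
Hypotheses (alg : is_algebra Sig) (hX : convex_in X).
Context {u : V -> R} {m M : (S -> V) -> R}.
Hypotheses (haff : affine_on X u) (Hm : invariant_functional Sig X u m)
  (HM : invariant_functional Sig X u M) (hmM : forall f, is_act Sig X f -> m f <= M f).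
Context {pref : (S -> V) -> (S -> V) -> Prop}.
Hypothesis hpref : forall f g, is_act Sig X f -> is_act Sig X g ->
  (pref f g <-> m g < m f /\ M g < M f).

Local Notation F := (is_act Sig X).

Local Notation alpha := (alpha_maxmin m M).

Lemma alpha_maxmin_cst a x : X x -> alpha a (cst_act x) = u x.
Proof. by move=> Xx; rewrite /alpha_maxmin (ifun_cst Hm) ?(ifun_cst HM) //; ring. Qed.

Lemma alpha_maxmin_invariant_biseparable a P : 0 <= a <= 1 ->
  represents Sig X P (alpha a) -> invariant_biseparable Sig X P /\ extends_on F pref P.
Proof.
move=> ha hrep; split.
  exact (represents_invariant_biseparable alg hX (ifun_convex Hm HM ha) hrep).
by move=> f g hf hg /(hpref _ _ hf hg) [h1 h2]; apply/hrep => //; apply: lt_convex.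
Qed.

Lemma not_complete_spread : ~ complete_on F pref -> exists2 h, F h & m h < M h.
Proof.
move=> nc; apply: contrapT => nh; apply: nc.
have mE f : F f -> M f = m f.
  move=> hf; apply/eqP; rewrite eq_le hmM // andbT leNgt; apply/negP => H.
  by apply: nh; exists f.
have indiff_eq f g : F f -> F g -> indiff pref f g -> m f = m g.
  move=> hf hg [n1 n2]; case: (ltgtP (m f) (m g)) => // H.
    by case: n2; apply/hpref => //; rewrite !mE.
  by case: n1; apply/hpref => //; rewrite !mE.
move=> f g h hf hg hh Ifg Igh; have := indiff_eq _ _ hf hg Ifg.
by rewrite (indiff_eq _ _ hg hh Igh) => efh; split; rewrite hpref // efh ltxx; case.
Qed.

Lemma alpha_maxmin_unique P : ~ complete_on F pref -> forall a b, 0 <= a <= 1 -> 0 <= b <= 1 ->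
  represents Sig X P (alpha a) -> represents Sig X P (alpha b) -> a = b.
Proof.
move=> nc a b ha hb ra rb; have [h hh hlt] := not_complete_spread nc.
wlog ab : a b ha hb ra rb / a < b.
  move=> wlog; case: (ltgtP a b) => [ab|ba|//]; first exact: (wlog a b ha hb ra rb ab).
  by apply/esym; exact: (wlog b a hb ha rb ra ba).
have [s1 [_ /andP[h1 _]]] := ifun_bounds Hm h hh.
have [_ [s2 /andP[_ h2]]] := ifun_bounds HM h hh.
have mMh := hmM h hh; case/andP: ha => a0 a1; case/andP: hb => b0 b1.
have gap : alpha b h < alpha a h.
  rewrite /alpha_maxmin; have : 0 < (b - a) * (M h - m h) by rewrite mulr_gt0 // subr_gt0.
  lra.
have [y Xy uy] : exists2 y, X y & u y = (alpha a h + alpha b h) / 2.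
  apply: (affine_ivt hX haff (hh.1 s1) (hh.1 s2)).
  by rewrite /alpha_maxmin; apply/andP; split; nra.
have cy := cst_is_act alg Xy.
have Pa : P h (cst_act y) by apply/ra => //; rewrite alpha_maxmin_cst // uy; lra.
by have := iffLR (rb _ _ hh cy) Pa; rewrite alpha_maxmin_cst // uy; lra.
Qed.

Section CertaintyEquivalents.
Variables xlo xhi : V.
Hypotheses (Xlo : X xlo) (Xhi : X xhi) (ulh : u xlo < u xhi).
Context {P : (S -> V) -> (S -> V) -> Prop}.
Hypotheses (Pasym : asymmetric_on F P) (Pneg : neg_transitive_on F P).
Hypothesis Pcont : forall f g h, F f -> F g -> F h ->
  open_in_unit (fun a => P (mix a f g) h) /\ open_in_unit (fun a => P h (mix a f g)).
Hypothesis PCI : forall f g x (a : R), F f -> F g -> X x -> 0 < a < 1 ->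
  (P f g <-> P (mix a f (cst_act x)) (mix a g (cst_act x))).
Hypothesis Pext : extends_on F pref P.

Local Notation indiff := (indiff P).

Lemma P_of_mM_lt f g : F f -> F g -> m g < m f -> M g < M f -> P f g.
Proof. by move=> hf hg h1 h2; apply: Pext => //; apply/hpref. Qed.

Lemma mix_cst_below f z (a : R) : F f -> X z -> 0 < a < 1 -> u z < m f ->
  m (mix a f (cst_act z)) < m f /\ M (mix a f (cst_act z)) < M f.
Proof.
move=> hf Xz /andP[a0 a1] hz; have ha : 0 < a <= 1 by rewrite a0 ltW.
rewrite (ifun_mix_cst Hm) ?(ifun_mix_cst HM) //; have := hmM f hf.
have : 0 < (1 - a) * (m f - u z) by rewrite mulr_gt0 // subr_gt0.
by split; nra.
Qed.

Lemma mix_cst_above f z (a : R) : F f -> X z -> 0 < a < 1 -> M f < u z ->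
  m f < m (mix a f (cst_act z)) /\ M f < M (mix a f (cst_act z)).
Proof.
move=> hf Xz /andP[a0 a1] hz; have ha : 0 < a <= 1 by rewrite a0 ltW.
rewrite (ifun_mix_cst Hm) ?(ifun_mix_cst HM) //; have := hmM f hf.
have : 0 < (1 - a) * (u z - M f) by rewrite mulr_gt0 // subr_gt0.
by split; nra.
Qed.

(* Mixing with [mid] moves m f and M f strictly inside the range of u, which
   provides constants strictly worse and strictly better than the mixture. *)
Definition mid : V := 2^-1 *: xhi + (1 - 2^-1) *: xlo.

Lemma half_in01 : 0 < (2^-1 : R) < 1.
Proof. by rewrite invr_gt0 ltr0n invf_lt1 ?ltr1n. Qed.

Lemma half_le01 : 0 <= (2^-1 : R) <= 1.
Proof. by have /andP[h0 h1] := half_in01; rewrite !ltW. Qed.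

Lemma Xmid : X mid.
Proof. exact: hX _ _ Xhi Xlo _ half_le01. Qed.

Lemma u_mid : 2 * u mid = u xhi + u xlo.
Proof.
by rewrite haff //; have /andP[? ?] := half_in01; [field|apply/andP; split; apply: ltW].
Qed.

Definition half (f : S -> V) := mix 2^-1 f (cst_act mid).

Lemma half_act f : F f -> F (half f).
Proof.
move=> hf; exact: (mix_is_act alg _ _ _ hX half_le01 hf (cst_is_act alg Xmid)).
Qed.

Lemma half_mM f : F f ->
  2 * m (half f) = m f + u mid /\ 2 * M (half f) = M f + u mid.
Proof.
move=> hf; have /andP[h0 h1] := half_in01; have ha : 0 < (2^-1 : R) <= 1 by rewrite h0 ltW.
by rewrite (ifun_mix_cst Hm _ _ _ hf Xmid ha) (ifun_mix_cst HM _ _ _ hf Xmid ha); split; field.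
Qed.

Lemma half_interior f : F f ->
  (exists2 z, X z & u z < m (half f)) /\ (exists2 z, X z & M (half f) < u z).
Proof.
move=> hf; have [hm hM] := half_mM _ hf; have := u_mid; have := ulh.
have [s1 [_ /andP[h1 _]]] := ifun_bounds Hm f hf.
have [_ [s2 /andP[_ h2]]] := ifun_bounds HM f hf.
split.
  case: (leP (u (f s1)) (u xlo)) => h; [exists (f s1); first exact: hf.1|exists xlo] => //; lra.
case: (leP (u xhi) (u (f s2))) => h; [exists (f s2); first exact: hf.1|exists xhi] => //; lra.
Qed.

Lemma P_eq_mM_l f f' g : F f -> F f' -> F g -> m f = m f' -> M f = M f' -> P f g -> P f' g.
Proof.
move=> hf hf' hg em eM /(PCI _ _ _ _ hf hg Xmid half_in01) hP.
apply/(PCI _ _ _ _ hf' hg Xmid half_in01).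
have hf2 := half_act _ hf; have hf2' := half_act _ hf'; have hg2 := half_act _ hg.
have [[z Xz hz] _] := half_interior _ hf; have cz := cst_is_act alg Xz.
have [A1o _] := Pcont _ _ _ hf2 cz hg2.
have A1 : P (mix 1 (half f) (cst_act z)) (half g) by rewrite mix1.
have [a a01 hPa] := open_in_unit_near1 A1o A1.
have [hmlt hMlt] := mix_cst_below _ _ _ hf2 Xz a01 hz.
have [hm hM] := half_mM _ hf; have [hm' hM'] := half_mM _ hf'.
have hfz : F (mix a (half f) (cst_act z)).
  by apply: mix_is_act => //; case/andP: a01 => a0 a1; rewrite !ltW.
apply: (asym_neg_transitive_trans Pasym Pneg hf2' hfz hg2 _ hPa).
by apply: P_of_mM_lt => //; lra.
Qed.

Lemma P_eq_mM_r f f' g : F f -> F f' -> F g -> m f = m f' -> M f = M f' -> P g f -> P g f'.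
Proof.
move=> hf hf' hg em eM /(PCI _ _ _ _ hg hf Xmid half_in01) hP.
apply/(PCI _ _ _ _ hg hf' Xmid half_in01).
have hf2 := half_act _ hf; have hf2' := half_act _ hf'; have hg2 := half_act _ hg.
have [_ [z Xz hz]] := half_interior _ hf; have cz := cst_is_act alg Xz.
have [_ B1o] := Pcont _ _ _ hf2 cz hg2.
have B1 : P (half g) (mix 1 (half f) (cst_act z)) by rewrite mix1.
have [a a01 hPa] := open_in_unit_near1 B1o B1.
have [hmlt hMlt] := mix_cst_above _ _ _ hf2 Xz a01 hz.
have [hm hM] := half_mM _ hf; have [hm' hM'] := half_mM _ hf'.
have hfz : F (mix a (half f) (cst_act z)).
  by apply: mix_is_act => //; case/andP: a01 => a0 a1; rewrite !ltW.
apply: (asym_neg_transitive_trans Pasym Pneg hg2 hfz hf2' hPa).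
by apply: P_of_mM_lt => //; lra.
Qed.

Lemma P_cst x y : X x -> X y -> (P (cst_act x) (cst_act y) <-> u y < u x).
Proof.
move=> Xx Xy; have cx := cst_is_act alg Xx; have cy := cst_is_act alg Xy.
have mx := ifun_cst Hm _ Xx; have my := ifun_cst Hm _ Xy.
have Mx := ifun_cst HM _ Xx; have My := ifun_cst HM _ Xy.
split=> [hP|hlt]; last by apply: P_of_mM_lt; rewrite ?mx ?my ?Mx ?My.
case: (ltgtP (u y) (u x)) => // [hlt|heq].
  by case: (Pasym _ _ cx cy hP); apply: P_of_mM_lt; rewrite ?mx ?my ?Mx ?My.
have hPy : P (cst_act y) (cst_act y).
  by apply: (P_eq_mM_l _ _ _ cx cy cy) hP; rewrite ?mx ?my ?Mx ?My.
by case: (Pasym _ _ cy cy hPy).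
Qed.

Lemma indiff_cst_bounds f y : F f -> X y -> indiff f (cst_act y) -> m f <= u y <= M f.
Proof.
move=> hf Xy [n1 n2]; have cy := cst_is_act alg Xy; have mMf := hmM f hf.
rewrite !leNgt; apply/andP; split; apply/negP => H.
  by apply: n1; apply: P_of_mM_lt; rewrite ?(ifun_cst Hm) ?(ifun_cst HM) //; lra.
by apply: n2; apply: P_of_mM_lt; rewrite ?(ifun_cst Hm) ?(ifun_cst HM) //; lra.
Qed.

Lemma indiff_cst_unique f y y' : F f -> X y -> X y' ->
  indiff f (cst_act y) -> indiff f (cst_act y') -> u y = u y'.
Proof.
move=> hf Xy Xy' [n1 n2] I'; have cy := cst_is_act alg Xy; have cy' := cst_is_act alg Xy'.
have [H1 H2] := indiff_trans Pneg cy hf cy' (conj n2 n1) I'.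
by case: (ltgtP (u y) (u y')) => // h; [case: H2|case: H1]; apply/P_cst.
Qed.

Lemma indiff_cst_mM f f' y : F f -> F f' -> X y -> m f = m f' -> M f = M f' ->
  indiff f (cst_act y) -> indiff f' (cst_act y).
Proof.
move=> hf hf' Xy em eM [n1 n2]; have cy := cst_is_act alg Xy.
split=> H; first by apply: n1; apply: (P_eq_mM_l _ _ _ hf' hf cy) H.
by apply: n2; apply: (P_eq_mM_r _ _ _ hf' hf cy) H.
Qed.

Lemma indiff_cst_mix f y z (a : R) : F f -> X y -> X z -> 0 < a < 1 ->
  indiff f (cst_act y) <-> indiff (mix a f (cst_act z)) (cst_act (a *: y + (1 - a) *: z)).
Proof.
move=> hf Xy Xz ha; have cy := cst_is_act alg Xy.
by rewrite /indiff (PCI _ _ _ _ hf cy Xz ha) (PCI _ _ _ _ cy hf Xz ha).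
Qed.

Lemma certainty_equivalent_half f : F f -> exists2 y, X y & indiff (half f) (cst_act y).
Proof.
move=> hf; have hf2 := half_act _ hf; have mM2 := hmM _ hf2.
have [[zl Xzl hzl] [zh Xzh hzh]] := half_interior _ hf.
have czl := cst_is_act alg Xzl; have czh := cst_is_act alg Xzh.
have [oA oB] := Pcont _ _ _ czh czl hf2.
have A1 : P (mix 1 (cst_act zh) (cst_act zl)) (half f).
  by rewrite mix1; apply: P_of_mM_lt; rewrite ?(ifun_cst Hm) ?(ifun_cst HM) //; lra.
have B0 : P (half f) (mix 0 (cst_act zh) (cst_act zl)).
  by rewrite mix0; apply: P_of_mM_lt; rewrite ?(ifun_cst Hm) ?(ifun_cst HM) //; lra.
have [t [t01 [nA nB]]] := open_in_unit_gap oA oB A1 B0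
  (fun t t01 => Pasym _ _ (mix_is_act alg _ _ _ hX t01 czh czl) hf2).
by exists (t *: zh + (1 - t) *: zl); [exact: hX|split].
Qed.

Lemma certainty_equivalent f : F f -> exists2 y, X y & indiff f (cst_act y).
Proof.
move=> hf; have [y2 Xy2 I2] := certainty_equivalent_half _ hf.
have /andP[b1 b2] := indiff_cst_bounds _ _ (half_act _ hf) Xy2 I2.
have [hm hM] := half_mM _ hf.
have [s1 [_ /andP[h1 _]]] := ifun_bounds Hm f hf.
have [_ [s2 /andP[_ h2]]] := ifun_bounds HM f hf.
have [y Xy uy] : exists2 y, X y & u y = 2 * u y2 - u mid.
  by apply: (affine_ivt hX haff (hf.1 s1) (hf.1 s2)); apply/andP; split; lra.
exists y => //; apply/(indiff_cst_mix _ _ _ _ hf Xy Xmid half_in01).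
have Xy' : X (2^-1 *: y + (1 - 2^-1) *: mid) by apply: hX => //; [exact: Xmid|exact: half_le01].
apply: (indiff_trans Pneg (half_act _ hf) (cst_is_act alg Xy2) (cst_is_act alg Xy')) => //.
have uy' : u (2^-1 *: y + (1 - 2^-1) *: mid) = u y2.
  by rewrite haff ?uy //; [field|exact: Xmid|exact: half_le01].
by split; rewrite P_cst // uy' ltxx.
Qed.

Lemma mid_shift {k : R} (J : R) : 0 < k ->
  exists e z, [/\ 0 < e < 1, e * k < 1, X z & (1 - e) * u z = (1 - e) * u mid + e * J].
Proof.
move=> k0; have r0 : 0 < (u xhi - u xlo) / 2 by rewrite divr_gt0 // subr_gt0 ulh.
have [e e01 [ek eJ]] := small_mix_weight J k0 r0.
have /andP[e0 e1] := e01; have e1' : 0 < 1 - e by rewrite subr_gt0.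
have [z Xz uz] : exists2 z, X z & u z = u mid + e * J / (1 - e).
  apply: (affine_ivt hX haff Xlo Xhi).
  have : `|e * J / (1 - e)| <= (u xhi - u xlo) / 2.
    by rewrite normrM normfV (gtr0_norm e1') ler_pdivrMr.
  rewrite ler_norml => /andP[q1 q2]; have um := u_mid; have hl := ulh.
  by apply/andP; split; lra.
by exists e, z; split=> //; rewrite uz; field; rewrite lt0r_neq0.
Qed.

(* f and h are mixed with constants into two acts with the same m and M, whose
   certainty equivalents must then have the same utility. *)
Lemma certainty_equivalent_ratio h f yh y : F h -> F f -> X yh -> X y ->
  m h < M h -> m f < M f -> indiff h (cst_act yh) -> indiff f (cst_act y) ->
  (M f - u y) / (M f - m f) = (M h - u yh) / (M h - m h).
Proof.
move=> hh hf Xyh Xy hlt flt Ih If.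
have wf0 : 0 < M f - m f by rewrite subr_gt0.
have wh0 : 0 < M h - m h by rewrite subr_gt0.
set k := (M h - m h) / (M f - m f); have k0 : 0 < k by rewrite divr_gt0.
have kw : k * (M f - m f) = M h - m h by rewrite /k; field; rewrite lt0r_neq0.
set J := k * (m f - u mid) - (m h - u mid).
have [e [z [/andP[e0 e1] ek Xz Ez]]] := mid_shift J k0.
have ek01 : 0 < e * k < 1 by rewrite ek mulr_gt0.
have e01 : 0 < e < 1 by rewrite e0 e1.
have ek_le : 0 <= e * k <= 1 by case/andP: ek01 => ? ?; rewrite !ltW.
have e_le : 0 <= e <= 1 by rewrite !ltW.
have ek' : 0 < e * k <= 1 by case/andP: ek01 => -> ?; rewrite ltW.
have e' : 0 < e <= 1 by rewrite e0 ltW.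
have Xf' : X (e * k *: y + (1 - e * k) *: mid) := hX _ _ Xy Xmid _ ek_le.
have Xh' : X (e *: yh + (1 - e) *: z) := hX _ _ Xyh Xz _ e_le.
have hf' := mix_is_act alg _ _ _ hX ek_le hf (cst_is_act alg Xmid).
have hh' := mix_is_act alg _ _ _ hX e_le hh (cst_is_act alg Xz).
have If' := iffLR (indiff_cst_mix _ _ _ _ hf Xy Xmid ek01) If.
have Ih' := iffLR (indiff_cst_mix _ _ _ _ hh Xyh Xz e01) Ih.
have em : m (mix e h (cst_act z)) = m (mix (e * k) f (cst_act mid)).
  rewrite (ifun_mix_cst Hm _ _ _ hh Xz e') (ifun_mix_cst Hm _ _ _ hf Xmid ek').
  by move: Ez; rewrite /J; lra.
have eM : M (mix e h (cst_act z)) = M (mix (e * k) f (cst_act mid)).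
  rewrite (ifun_mix_cst HM _ _ _ hh Xz e') (ifun_mix_cst HM _ _ _ hf Xmid ek').
  by move: Ez kw; rewrite /J; nra.
have := indiff_cst_unique _ _ _ hf' Xf' Xh' If' (indiff_cst_mM _ _ _ hh' hf' Xh' em eM Ih').
rewrite (haff _ _ Xy Xmid _ ek_le) (haff _ _ Xyh Xz _ e_le) => Eu.
have : e * (k * (M f - u y)) = e * (M h - u yh).
  move: eM; rewrite (ifun_mix_cst HM _ _ _ hh Xz e') (ifun_mix_cst HM _ _ _ hf Xmid ek').
  by move: Eu; lra.
move/(mulfI (lt0r_neq0 e0)) <-; rewrite /k; field.
by rewrite !lt0r_neq0.
Qed.

Lemma represents_of_certainty_equivalents a :
  (forall f y, F f -> X y -> indiff f (cst_act y) -> u y = alpha a f) ->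
  represents Sig X P (alpha a).
Proof.
move=> hce f g hf hg.
have [yf Xyf If] := certainty_equivalent _ hf; have [yg Xyg Ig] := certainty_equivalent _ hg.
have cf := cst_is_act alg Xyf; have cg := cst_is_act alg Xyg.
rewrite -(hce _ _ hf Xyf If) -(hce _ _ hg Xyg Ig) -P_cst //.
by rewrite (indiff_prefl Pneg hf cf hg If); apply: (indiff_prefr Pneg hg cg cf Ig).
Qed.

Lemma alpha_maxmin_exists : exists a, 0 <= a <= 1 /\ represents Sig X P (alpha a).
Proof.
have [[h hh hlt]|nspread] := pselect (exists2 h, F h & m h < M h); last first.
  exists 1; split; first by rewrite ler01 lexx.
  apply: represents_of_certainty_equivalents => f y hf Xy If.
  have /andP[b1 b2] := indiff_cst_bounds _ _ hf Xy If.
  have : ~ m f < M f by move=> H; apply: nspread; exists f.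
  by rewrite /alpha_maxmin subrr mul0r addr0 mul1r => /negP; rewrite -leNgt; lra.
have [yh Xyh Ih] := certainty_equivalent _ hh.
have /andP[c1 c2] := indiff_cst_bounds _ _ hh Xyh Ih.
have wh0 : 0 < M h - m h by rewrite subr_gt0.
exists ((M h - u yh) / (M h - m h)); split.
  apply/andP; split; first by apply: divr_ge0; lra.
  by rewrite ler_pdivrMr // mul1r; lra.
apply: represents_of_certainty_equivalents => f y hf Xy If.
have /andP[b1 b2] := indiff_cst_bounds _ _ hf Xy If.
have [eMm|neMm] := eqVneq (m f) (M f).
  have -> : u y = m f by lra.
  by rewrite /alpha_maxmin -eMm; ring.
have flt : m f < M f by rewrite lt_neqAle neMm hmM.
rewrite /alpha_maxmin -(certainty_equivalent_ratio _ _ _ _ hh hf Xyh Xy hlt flt Ih If).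
by field; rewrite lt0r_neq0 // subr_gt0.
Qed.

End CertaintyEquivalents.
End HopeAndPrepare.

Lemma nonconstant_on_lt {R : realType} {V : lmodType R} {X : set V} {u : V -> R} :
  nonconstant_on X u -> exists x y, [/\ X x, X y & u x < u y].
Proof.
case=> x [y [Xx [Xy nxy]]].
by case: (ltgtP (u x) (u y)) => h; [exists x, y|exists y, x|].
Qed.

Theorem theorem3 (R : realType) (V : lmodType R) (S : Type)
  (Sig : set (set S)) (X : set V)
  (pref : (S -> V) -> (S -> V) -> Prop)
  (u : V -> R) (C D : set (set S -> R))
  (pstar : (S -> V) -> (S -> V) -> Prop) :
  is_algebra Sig ->
  convex_in X ->
  (exists x y, X x /\ X y /\ x <> y) ->
  unique_HP_rep Sig X pref u C D ->
  ((invariant_biseparable Sig X pstar /\ extends_on (is_act Sig X) pref pstar)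
     <-> exists a : R, 0 <= a <= 1 /\ alpha_rep Sig X pstar u C D a) /\
  (~ complete_on (is_act Sig X) pref ->
     forall a b : R, 0 <= a <= 1 -> 0 <= b <= 1 ->
       alpha_rep Sig X pstar u C D a -> alpha_rep Sig X pstar u C D b -> a = b).
Proof.
move=> alg hX _ [[haff [hnc [hC [hD [_ [_ [_ [_ [hCD hpref]]]]]]]]] _].
have [p [Cp Dp]] := hCD.
have Hm := minC_invariant C u alg hX hC (ex_intro _ p Cp) haff.
have HM := maxD_invariant alg hX D u hD (ex_intro _ p Dp) haff.
have hmM f := @minC_le_maxD _ _ _ _ X C D u f alg hC hD hCD.
split; last exact (alpha_maxmin_unique alg hX haff Hm HM hmM hpref pstar).
split=> [[[Pasym [_ [Pneg [Pcont [PCI _]]]]] Pext]|[a [ha hrep]]].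
  have [xlo [xhi [Xlo Xhi ulh]]] := nonconstant_on_lt hnc.
  exact (alpha_maxmin_exists alg hX haff Hm HM hmM hpref _ _ Xlo Xhi ulh
    Pasym Pneg Pcont PCI Pext).
exact (alpha_maxmin_invariant_biseparable alg hX Hm HM hpref a pstar ha hrep).
Qed.
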